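(* Let $X$ be a non-empty set. The monoid $T_X$ is right protomodal, and for every maximal left pre-reduced subset $E\subseteq E(T_X)$, $T_X$ is an inductive right $E$-monoid and $(P^{lt}_X,\cdot,R)\cong RRest(E,T_X)$ as unary semigroups.
   Context: A partition on $X$ is a set partition of $X\cup X'$, where $X'=\{x'\mid x\in X\}$ is a disjoint copy of $X$. The product $\alpha\beta$ of partitions: take a further disjoint copy $X''$; let $\alpha^\downarrow$ be the partition of $X\cup X''$ obtained from $\alpha$ by renaming each $x'$ as $x''$, and $\beta^\uparrow$ the partition of $X''\cup X'$ obtained from $\beta$ by renaming each $x$ as $x''$; form the graph on $X\cup X''\cup X'$ joining two vertices when they lie in a common block of $\alpha^\downarrow$ or of $\beta^\uparrow$; the blocks of $\alpha\beta$ are the non-empty intersections of its connected components with $X\cup X'$. This makes the set $P_X$ of partitions a monoid. $P^{lt}_X$ is the submonoid of left total partitions: those in which every $x\in X$ lies in a block containing some element of $X'$. For $\rho\in P^{lt}_X$ let $R(\rho)$ be the partition whose blocks are the sets $A\cup\{a'\mid a\in A\}$, where $A$ ranges over the classes of the equivalence relation on $X$ given by $x\sim y$ iff $x',y'$ lie in the same block of $\rho$; then $(P^{lt}_X,\cdot,R)$ is a right restriction monoid, i.e. it satisfies $xR(x)=x$, $R(x)R(y)=R(y)R(x)$, $R(xR(y))=R(x)R(y)$, $R(x)y=yR(xy)$. $T_X$ (maps $X\to X$, composed left to right: $st$ means $s$ first, then $t$) is identified with a submonoid of $P^{lt}_X$ via $t\mapsto$ the partition with blocks $t^{-1}(y)\cup\{y'\}$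 for $y\in\mathrm{ran}(t)$ and $\{y'\}$ for $y\notin\mathrm{ran}(t)$. For a semigroup $S$, $E(S)$ is its set of idempotents and $fS=\{fu\mid u\in S\}$; for $e,f\in E(S)$, $e\le_l f$ iff $e=fe$, and $e\sim_l f$ iff $e\le_l f$ and $f\le_l e$. $E\subseteq E(S)$ is left pre-reduced if $e=fe$ and $f=ef$ imply $e=f$ for $e,f\in E$, and maximal left pre-reduced if it contains exactly one element of each $\sim_l$-class of $E(S)$. A monoid $S$ is right protomodal if for every $e\in E(S)$ and $s\in S$, the set $\{u\in S\mid su=esu\}$ is non-empty and equals $fS$ for some $f\in E(S)$. Let $S$ be a monoid and $1\in E\subseteq E(S)$. $S$ is an inductive right $E$-monoid if $E$ is left pre-reduced, $(E,\le_l)$ is a meet-semilattice with meet $\wedge$, and (J1) for all $t\in S$, $e\in E$ there is $e\cdot t\in E$ such that for all $s\in S$: $ets=ts$ iff $(e\cdot t)s=s$; (J2) for $s\in S$, $e,f\in E$: $es=fs=s$ implies $(e\wedge f)s=s$. Then $RRest(E,S)$ is the set $\{(s,e)\in S\times E\mid se=s\}$ with multiplication $(s,e)(t,f)=(stg,g)$ where $g=(e\cdot t)\wedge f$, and unary operation $R((s,e))=(e,e)$. *)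

From Stdlib Require Import Relations.

Set Implicit Arguments.

Section Generic.
Variable S : Type.
Variable mul : S -> S -> S.

Definition idem (e : S) : Prop := mul e e = e.

Definition le_l (e f : S) : Prop := e = mul f e.
Definition sim_l (e f : S) : Prop := le_l e f /\ le_l f e.

Definition left_pre_reduced (E : S -> Prop) : Prop :=
  forall e f, E e -> E f -> e = mul f e -> f = mul e f -> e = f.

Definition max_left_pre_reduced (E : S -> Prop) : Prop :=
  (forall e, E e -> idem e) /\
  (forall e, idem e -> exists! f, E f /\ sim_l f e).

Definition right_protomodal : Prop :=
  forall e s, idem e ->
    (exists u, mul s u = mul e (mul s u)) /\
    (exists f, idem f /\
       forall u, mul s u = mul e (mul s u) <-> exists v, u = mul f v).

Definition is_meet (E : S -> Prop) (meet : S -> S -> S) : Prop :=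
  forall e f, E e -> E f ->
    E (meet e f) /\ le_l (meet e f) e /\ le_l (meet e f) f /\
    (forall g, E g -> le_l g e -> le_l g f -> le_l g (meet e f)).

Definition is_dot (E : S -> Prop) (dot : S -> S -> S) : Prop :=
  forall t e, E e ->
    E (dot e t) /\
    (forall s, mul (mul e t) s = mul t s <-> mul (dot e t) s = s).

Definition inductive_right_E_monoid (one : S) (E : S -> Prop) : Prop :=
  E one /\ (forall e, E e -> idem e) /\
  left_pre_reduced E /\
  (exists meet, is_meet E meet) /\
  (exists dot, is_dot E dot) /\
  (forall meet, is_meet E meet ->
     forall s e f, E e -> E f -> mul e s = s -> mul f s = s ->
       mul (meet e f) s = s).

Definition rrest_carrier (E : S -> Prop) (p : S * S) : Prop :=
  E (snd p) /\ mul (fst p) (snd p) = fst p.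

Definition rrest_mul (dot meet : S -> S -> S) (p q : S * S) : S * S :=
  let g := meet (dot (snd p) (fst q)) (snd q) in
  (mul (mul (fst p) (fst q)) g, g).

Definition rrest_R (p : S * S) : S * S := (snd p, snd p).
End Generic.

Definition tmul {X : Type} (s t : X -> X) : X -> X := fun x => t (s x).
Definition tone {X : Type} : X -> X := fun x => x.

(* ---------- Partitions of X u X' : inl x = x, inr x = x' ---------- *)
Record partition (X : Type) := Partition {
  prel : X + X -> X + X -> Prop;
  prel_equiv : equivalence _ prel }.
Arguments prel {X} p _ _.

(* three copies X, X'', X' *)
Inductive tri (X : Type) := Top (x : X) | Mid (x : X) | Bot (x : X).
Arguments Top {X} x. Arguments Mid {X} x. Arguments Bot {X} x.

Definition down {X} (u : X + X) : tri X :=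
  match u with inl x => Top x | inr x => Mid x end.
Definition up {X} (u : X + X) : tri X :=
  match u with inl x => Mid x | inr x => Bot x end.
Definition outer {X} (u : X + X) : tri X :=
  match u with inl x => Top x | inr x => Bot x end.

Definition prod_edge {X} (a b : partition X) (u v : tri X) : Prop :=
  (exists p q, down p = u /\ down q = v /\ prel a p q) \/
  (exists p q, up p = u /\ up q = v /\ prel b p q).

Definition pmul_rel {X} (a b : partition X) (u v : X + X) : Prop :=
  clos_refl_sym_trans _ (prod_edge a b) (outer u) (outer v).

Lemma pmul_rel_equiv {X} (a b : partition X) : equivalence _ (pmul_rel a b).
Proof.
  destruct (Operators_Properties.clos_rst_is_equiv _ (prod_edge a b)) as [r t s].
  split; unfold pmul_rel; [intros u|intros u v w|intros u v]; eauto.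
Qed.

Definition pmul {X} (a b : partition X) : partition X :=
  Partition (pmul_rel_equiv a b).

Definition left_total {X} (a : partition X) : Prop :=
  forall x, exists y, prel a (inl x) (inr y).

Definition strip {X} (u : X + X) : X := match u with inl x => x | inr x => x end.

Definition pR_rel {X} (a : partition X) (u v : X + X) : Prop :=
  prel a (inr (strip u)) (inr (strip v)).

Lemma pR_rel_equiv {X} (a : partition X) : equivalence _ (pR_rel a).
Proof.
  destruct (prel_equiv a) as [r t s].
  split; unfold pR_rel; [intros u|intros u v w|intros u v]; eauto.
Qed.

Definition pR {X} (a : partition X) : partition X := Partition (pR_rel_equiv a).

Definition plt_iso_rrest (X : Type) (E : (X -> X) -> Prop)
    (dot meet : (X -> X) -> (X -> X) -> (X -> X)) : Prop :=
  exists phi : partition X -> (X -> X) * (X -> X),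
    (forall a b, left_total a -> left_total b -> phi a = phi b -> a = b) /\
    (forall p, rrest_carrier tmul E p <-> exists a, left_total a /\ phi a = p) /\
    (forall a b, left_total a -> left_total b ->
       phi (pmul a b) = rrest_mul tmul dot meet (phi a) (phi b)) /\
    (forall a, left_total a -> phi (pR a) = rrest_R (phi a)).

(* Everything is read off KERNELS.  In T_X (composition left to right) an
   idempotent f satisfies f;u = u iff ker f ⊆ ker u; hence e ≤_l f iff
   ker f ⊆ ker e, and e ~_l f iff ker e = ker f.  Every equivalence relation
   on X is the kernel of an idempotent (choose a representative per class),
   so a maximal left pre-reduced E contains exactly one idempotent [EK E J]
   with any prescribed kernel J.  Consequently:
   - e.t is the element of E whose kernel is generated by the pairs
     (t x, t (e x)); the same construction gives right protomodality;
   - e ∧ f is the element of E whose kernel is the join of ker e and ker f,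
     which makes (J2) immediate;
   - a left-total partition a corresponds to the pair (s, e), where e ∈ E has
     kernel "x' and y' are in one block of a" and s x = e y for any y' in the
     block of x; a is then exactly the kernel of x ↦ s x, y' ↦ e y.  The
     product and R of partitions are computed by identifying the kernel of the
     resulting map, which gives the isomorphism with RRest(E, T_X). *)

From Stdlib Require Import Relations ClassicalEpsilon ProofIrrelevance
  PropExtensionality FunctionalExtensionality.

Section Kernels.
Context {X : Type}.

Definition kerIs (g : X -> X) (J : X -> X -> Prop) : Prop :=
  forall x y, g x = g y <-> J x y.

Definition ker_sub (f u : X -> X) : Prop := forall x y, f x = f y -> u x = u y.

Definition idemp (e : X -> X) : Prop := forall x, e (e x) = e x.

Lemma idem_idemp (e : X -> X) : idem tmul e <-> idemp e.
Proof.
  split.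
  - intros H x. exact (f_equal (fun h => h x) H).
  - intro H. apply functional_extensionality. exact H.
Qed.

Lemma tmul_fix_iff (f u : X -> X) : idemp f -> (tmul f u = u <-> ker_sub f u).
Proof.
  intros Hf; split.
  - intros H x y Hxy. rewrite <- H. unfold tmul. now rewrite Hxy.
  - intros H. apply functional_extensionality. intro x. apply H, Hf.
Qed.

Lemma le_l_iff (g e : X -> X) : idemp e -> (le_l tmul g e <-> ker_sub e g).
Proof.
  intro He. unfold le_l. rewrite <- tmul_fix_iff by exact He.
  split; intro H; symmetry; exact H.
Qed.

(* Every equivalence relation is the kernel of an idempotent: map each point
   to a chosen representative of its class. *)
Lemma ker_exists (hX : inhabited X) (J : X -> X -> Prop) :
  equivalence X J -> exists e, idemp e /\ kerIs e J.
Proof.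
  intros [Hr Ht Hs].
  set (r := fun x => epsilon hX (fun y => J x y)).
  assert (Hrep : forall x, J x (r x)).
  { intro x. apply epsilon_spec. exists x. apply Hr. }
  assert (Hclass : forall x y, J x y -> r x = r y).
  { intros x y H. unfold r. f_equal. apply functional_extensionality. intro z.
    apply propositional_extensionality. split; intro H'; eauto. }
  exists r. split.
  - intro x. apply Hclass, Hs, Hrep.
  - intros x y. split.
    + intro H. apply Ht with (r x); [apply Hrep|]. rewrite H. apply Hs, Hrep.
    + apply Hclass.
Qed.
End Kernels.

Definition crst {A} (R : A -> A -> Prop) : A -> A -> Prop := clos_refl_sym_trans A R.

Lemma crst_equiv {A} (R : A -> A -> Prop) : equivalence A (crst R).
Proof.
  destruct (Operators_Properties.clos_rst_is_equiv _ R) as [r t s].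
  split; unfold crst; [intros u|intros u v w|intros u v]; eauto.
Qed.

Lemma crst_ker {A B} (R : A -> A -> Prop) (u : A -> B) :
  (forall y z, R y z -> u y = u z) -> forall y z, crst R y z -> u y = u z.
Proof. intros H y z Hc. induction Hc; auto; congruence. Qed.

Lemma crst_map {A B} (R : A -> A -> Prop) (R' : B -> B -> Prop) (f : A -> B) :
  (forall y z, R y z -> crst R' (f y) (f z)) ->
  forall y z, crst R y z -> crst R' (f y) (f z).
Proof.
  intros H y z Hc. induction Hc.
  - auto.
  - apply rst_refl.
  - apply rst_sym; auto.
  - eapply rst_trans; eauto.
Qed.

(* The equivalence generated by the pairs (t x, t (e x)); by the identity
   below its kernel-idempotent describes {s | e;t;s = t;s}, which is both the
   right protomodal condition and axiom (J1). *)
Definition Pgen {X} (e t : X -> X) (y z : X) : Prop := exists x, y = t x /\ z = t (e x).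

Lemma gen_iff {X} (e t s : X -> X) :
  tmul (tmul e t) s = tmul t s <-> forall y z, crst (Pgen e t) y z -> s y = s z.
Proof.
  split.
  - intro H. apply crst_ker. intros y z [x [-> ->]].
    symmetry. exact (f_equal (fun h => h x) H).
  - intro H. apply functional_extensionality. intro x. unfold tmul.
    symmetry. apply H, rst_step. exists x. auto.
Qed.

Lemma dot_gen {X} (e t g : X -> X) : idemp g -> kerIs g (crst (Pgen e t)) ->
  forall s, tmul (tmul e t) s = tmul t s <-> tmul g s = s.
Proof.
  intros Hg Hk s. rewrite gen_iff, tmul_fix_iff by exact Hg.
  split; intros H x y Hxy; apply H, Hk, Hxy.
Qed.

Lemma protomodal {X} (hX : inhabited X) : right_protomodal (@tmul X).
Proof.
  intros e s He. split.
  - destruct hX as [x0]. exists (fun _ => x0). reflexivity.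
  - destruct (ker_exists hX _ (crst_equiv (Pgen e s))) as [f [Hf Hk]].
    exists f. split; [apply idem_idemp, Hf|]. intro u. split.
    + intro H. exists u. symmetry. apply (dot_gen _ _ _ Hf Hk). symmetry. exact H.
    + intros [v ->]. symmetry. apply (proj2 (dot_gen e s f Hf Hk (tmul f v))).
      apply functional_extensionality. intro x. unfold tmul. rewrite Hf. reflexivity.
Qed.

Section MaxLeftPreReduced.
Context {X : Type} (hX : inhabited X) (E : (X -> X) -> Prop).
Hypothesis HE : max_left_pre_reduced (@tmul X) E.

Lemma E_idemp e : E e -> idemp e.
Proof. intro H. apply idem_idemp, (proj1 HE), H. Qed.

Lemma E_left_pre_reduced : left_pre_reduced tmul E.
Proof.
  intros e f Ee Ef H1 H2.
  destruct (proj2 HE e (proj1 HE e Ee)) as [g [_ Hu]].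
  assert (Hge : g = e).
  { apply Hu. split; [exact Ee|]. split; apply le_l_iff; try apply E_idemp; auto;
      intros x y H; exact H. }
  assert (Hgf : g = f) by (apply Hu; split; auto; split; auto).
  congruence.
Qed.

Lemma E_ker_unique g1 g2 J : E g1 -> E g2 -> kerIs g1 J -> kerIs g2 J -> g1 = g2.
Proof.
  intros E1 E2 K1 K2. apply E_left_pre_reduced; auto;
    apply le_l_iff; try apply E_idemp; auto; intros x y H.
  - apply K1, K2, H.
  - apply K2, K1, H.
Qed.

Lemma E_ker_exists (J : X -> X -> Prop) :
  equivalence X J -> exists g, E g /\ kerIs g J.
Proof.
  intro HJ. destruct (ker_exists hX _ HJ) as [e [He HkJ]].
  destruct (proj2 HE e (proj2 (idem_idemp e) He)) as [f [[Ef [Hfe Hef]] _]].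
  exists f. split; [exact Ef|].
  apply le_l_iff in Hfe; [|exact He]. apply le_l_iff in Hef; [|apply E_idemp, Ef].
  intros x y. split; intro H.
  - apply HkJ, Hef, H.
  - apply Hfe, HkJ, H.
Qed.

(* The identity, being idempotent with trivial kernel, lies in E. *)
Lemma E_one : E tone.
Proof.
  destruct (proj2 HE tone eq_refl) as [f [[Ef [_ Hf]] _]].
  unfold le_l in Hf. rewrite Hf. exact Ef.
Qed.
End MaxLeftPreReduced.

Definition EK {X} (E : (X -> X) -> Prop) (J : X -> X -> Prop) : X -> X :=
  epsilon (inhabits (fun x : X => x)) (fun g => E g /\ kerIs g J).

Lemma EK_spec {X} (hX : inhabited X) E (HE : max_left_pre_reduced (@tmul X) E) J :
  equivalence X J -> E (EK E J) /\ kerIs (EK E J) J.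
Proof. intro HJ. unfold EK. apply epsilon_spec, (E_ker_exists hX E HE _ HJ). Qed.

Section EOperations.
Context {X : Type} (hX : inhabited X) (E : (X -> X) -> Prop).
Hypothesis HE : max_left_pre_reduced (@tmul X) E.

Definition dot0 (e t : X -> X) : X -> X := EK E (crst (Pgen e t)).

Lemma dot0_ker e t : kerIs (dot0 e t) (crst (Pgen e t)).
Proof. apply EK_spec, crst_equiv; assumption. Qed.

Lemma dot0_spec : is_dot tmul E dot0.
Proof.
  intros t e Ee. destruct (EK_spec hX E HE _ (crst_equiv (Pgen e t))) as [Eg Kg].
  split; [exact Eg|]. apply dot_gen; [apply (E_idemp E HE _ Eg)|exact Kg].
Qed.

Lemma dot_char dot : is_dot tmul E dot -> forall e t, E e -> dot e t = dot0 e t.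
Proof.
  intros Hd e t Ee. destruct (Hd t e Ee) as [Ed Hs].
  destruct (dot0_spec t e Ee) as [Eg Hg].
  assert (Hfix : forall s, tmul (dot e t) s = s <-> tmul (dot0 e t) s = s).
  { intro s. rewrite <- Hs. apply Hg. }
  apply (E_left_pre_reduced E HE); auto; symmetry; apply Hfix;
    apply idem_idemp, (E_idemp E HE); assumption.
Qed.

Definition Jm (e f : X -> X) : X -> X -> Prop :=
  crst (fun y z => e y = e z \/ f y = f z).

Lemma Jm_sub (e f u : X -> X) :
  ker_sub e u -> ker_sub f u -> forall x y, Jm e f x y -> u x = u y.
Proof. intros H1 H2. apply crst_ker. intros y z [H|H]; auto. Qed.

Definition meet0 (e f : X -> X) : X -> X := EK E (Jm e f).

Lemma meet0_spec : is_meet tmul E meet0.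
Proof.
  intros e f Ee Ef.
  destruct (EK_spec hX E HE _ (crst_equiv (fun y z => e y = e z \/ f y = f z))) as [Eg Kg].
  fold (Jm e f) in Eg, Kg. fold (meet0 e f) in Eg, Kg.
  pose proof (E_idemp E HE _ Ee) as Ie. pose proof (E_idemp E HE _ Ef) as If.
  split; [exact Eg|split; [|split]].
  - apply le_l_iff; auto. intros x y H. apply Kg, rst_step. auto.
  - apply le_l_iff; auto. intros x y H. apply Kg, rst_step. auto.
  - intros g _ H1 H2. apply le_l_iff in H1, H2; auto.
    apply le_l_iff; [apply (E_idemp E HE _ Eg)|].
    intros x y H. apply (Jm_sub e f g H1 H2), Kg, H.
Qed.

Lemma meet_char meet :
  is_meet tmul E meet -> forall e f, E e -> E f -> meet e f = meet0 e f.
Proof.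
  intros Hm e f Ee Ef. destruct (Hm e f Ee Ef) as [Em [L1 [L2 G]]].
  destruct (meet0_spec e f Ee Ef) as [E0 [M1 [M2 G0]]].
  apply (E_left_pre_reduced E HE); [exact Em|exact E0|apply G0|apply G]; assumption.
Qed.

Lemma meet0_ker e f : kerIs (meet0 e f) (Jm e f).
Proof. apply EK_spec, crst_equiv; assumption. Qed.

Lemma meet_J2 meet : is_meet tmul E meet ->
  forall s e f, E e -> E f -> tmul e s = s -> tmul f s = s -> tmul (meet e f) s = s.
Proof.
  intros Hm s e f Ee Ef H1 H2. rewrite (meet_char meet Hm e f Ee Ef).
  apply tmul_fix_iff in H1, H2; try apply (E_idemp E HE); auto.
  apply tmul_fix_iff.
  - apply (E_idemp E HE), (meet0_spec e f Ee Ef).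
  - intros x y H. apply (Jm_sub e f s H1 H2), meet0_ker, H.
Qed.

Lemma inductive_right_E : inductive_right_E_monoid tmul tone E.
Proof.
  split; [exact (E_one E HE)|split; [exact (proj1 HE)|split; [|split; [|split]]]].
  - exact (E_left_pre_reduced E HE).
  - exists meet0. exact meet0_spec.
  - exists dot0. exact dot0_spec.
  - exact meet_J2.
Qed.
End EOperations.

Definition key {X} (s e : X -> X) (u : X + X) : X :=
  match u with inl x => s x | inr y => e y end.

Definition represents {X} (a : partition X) (s e : X -> X) : Prop :=
  forall u v, prel a u v <-> key s e u = key s e v.

Lemma kerequiv {X} (k : X + X -> X) : equivalence (X + X) (fun u v => k u = k v).
Proof. split; [intros u|intros u v w|intros u v]; congruence. Qed.

Definition kpart {X} (k : X + X -> X) : partition X := Partition (kerequiv k).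

Lemma part_ext {X} (a b : partition X) : (forall u v, prel a u v <-> prel b u v) -> a = b.
Proof.
  destruct a as [ra Ha], b as [rb Hb]. simpl. intro H.
  assert (ra = rb).
  { apply functional_extensionality; intro u. apply functional_extensionality; intro v.
    apply propositional_extensionality. apply H. }
  subst. f_equal. apply proof_irrelevance.
Qed.

(* The product of two kernel partitions a ≅ (sa, ea) and b ≅ (sb, eb), with
   d = ea.sb and g = d ∧ eb given by their kernels.  In the three-layer graph
   every vertex is connected to a vertex of the bottom layer X', and two bottom
   vertices z1', z2' are connected iff g z1 = g z2; so the components are the
   kernel of [key3], and a.b is the kernel of [key (sa;sb;g) g]. *)
Section Product.
Context {X : Type} (a b : partition X) (sa ea sb eb d g : X -> X).
Hypothesis Ha : represents a sa ea.
Hypothesis Hb : represents b sb eb.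
Hypothesis Iea : idemp ea.
Hypothesis Ieb : idemp eb.
Hypothesis Hsa : forall x, ea (sa x) = sa x.
Hypothesis Hsb : forall x, eb (sb x) = sb x.
Hypothesis Kd : kerIs d (crst (Pgen ea sb)).
Hypothesis Kg : kerIs g (Jm d eb).

Definition key3 (p : tri X) : X :=
  match p with Top x => g (sb (sa x)) | Mid y => g (sb y) | Bot z => g z end.

Definition bottom (p : tri X) : X :=
  match p with Top x => sb (sa x) | Mid y => sb y | Bot z => z end.

Let conn := crst (prod_edge a b).

Lemma edge_a p q : prel a p q -> conn (down p) (down q).
Proof. intro H. apply rst_step. left. exists p, q. auto. Qed.

Lemma edge_b p q : prel b p q -> conn (up p) (up q).
Proof. intro H. apply rst_step. right. exists p, q. auto. Qed.

Lemma key3_down p : key3 (down p) = g (sb (key sa ea p)).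
Proof.
  destruct p as [x|y]; simpl; [reflexivity|].
  apply Kg, rst_step. left. apply Kd, rst_step. exists y. auto.
Qed.

Lemma key3_up p : key3 (up p) = g (key sb eb p).
Proof.
  destruct p as [x|z]; simpl; [reflexivity|].
  apply Kg, rst_step. right. rewrite Ieb. reflexivity.
Qed.

Lemma conn_bottom p : conn p (Bot (bottom p)).
Proof.
  destruct p as [x|y|z]; simpl.
  - eapply rst_trans.
    + apply (edge_a (inl x) (inr (sa x))), Ha. simpl. auto.
    + apply (edge_b (inl (sa x)) (inr (sb (sa x)))), Hb. simpl. auto.
  - apply (edge_b (inl y) (inr (sb y))), Hb. simpl. auto.
  - apply rst_refl.
Qed.

(* Bottom vertices with the same g-value are connected: the generators of
   ker d are realized by zigzags through a and b, those of ker eb by b. *)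
Lemma conn_bottoms z1 z2 : g z1 = g z2 -> conn (Bot z1) (Bot z2).
Proof.
  intro H. apply Kg in H.
  apply (crst_map (fun y z => d y = d z \/ eb y = eb z) _ (@Bot X)); [|exact H].
  intros y z [Hd|He].
  - apply Kd in Hd. apply (crst_map (Pgen ea sb) _ (@Bot X)); [|exact Hd].
    intros y' z' [x [-> ->]].
    eapply rst_trans; [apply rst_sym, (edge_b (inl x) (inr (sb x))), Hb; simpl; auto|].
    eapply rst_trans; [apply (edge_a (inr x) (inr (ea x))), Ha; simpl; auto|].
    apply (edge_b (inl (ea x)) (inr (sb (ea x)))), Hb. simpl. auto.
  - apply (edge_b (inr y) (inr z)), Hb. exact He.
Qed.

Lemma conn_iff_key3 p q : conn p q <-> key3 p = key3 q.
Proof.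
  split.
  - apply crst_ker. intros u v [[p' [q' [<- [<- H]]]]|[p' [q' [<- [<- H]]]]].
    + rewrite !key3_down. apply Ha in H. rewrite H. reflexivity.
    + rewrite !key3_up. apply Hb in H. rewrite H. reflexivity.
  - intro H.
    assert (Hb' : g (bottom p) = g (bottom q)) by (destruct p, q; exact H).
    eapply rst_trans; [apply conn_bottom|].
    eapply rst_trans; [apply conn_bottoms, Hb'|].
    apply rst_sym, conn_bottom.
Qed.

Lemma pmul_represents : represents (pmul a b) (fun x => g (sb (sa x))) g.
Proof. intros [x|x] [y|y]; exact (conn_iff_key3 _ _). Qed.
End Product.

Section Phi.
Context {X : Type} (hX : inhabited X) (E : (X -> X) -> Prop).
Hypothesis HE : max_left_pre_reduced (@tmul X) E.

Definition Rr (a : partition X) (x y : X) : Prop := prel a (inr x) (inr y).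

Lemma Rr_equiv (a : partition X) : equivalence X (Rr a).
Proof.
  destruct (prel_equiv a) as [r t s].
  split; unfold Rr; [intros u|intros u v w|intros u v]; eauto.
Qed.

Definition eA (a : partition X) : X -> X := EK E (Rr a).
Definition chA (a : partition X) (x : X) : X := epsilon hX (fun y => prel a (inl x) (inr y)).
Definition sA (a : partition X) (x : X) : X := eA a (chA a x).
Definition phi (a : partition X) : (X -> X) * (X -> X) := (sA a, eA a).

Lemma eA_spec a : E (eA a) /\ kerIs (eA a) (Rr a).
Proof. apply EK_spec, Rr_equiv; assumption. Qed.

Lemma sA_fix a x : eA a (sA a x) = sA a x.
Proof. exact (E_idemp E HE _ (proj1 (eA_spec a)) (chA a x)). Qed.

Lemma represents_phi a : left_total a -> represents a (sA a) (eA a).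
Proof.
  intro Hlt. destruct (eA_spec a) as [_ K]. destruct (prel_equiv a) as [r t s].
  set (w := fun u => match u with inl x => chA a x | inr y => y end).
  assert (Hw : forall u, prel a u (inr (w u))).
  { intros [x|y]; simpl; [|apply r]. unfold chA. apply epsilon_spec, Hlt. }
  assert (Hkey : forall u, key (sA a) (eA a) u = eA a (w u)) by (intros [x|y]; reflexivity).
  intros u v. rewrite !Hkey. split; intro H.
  - apply K. eapply t; [apply s, Hw|]. eapply t; [exact H|]. apply Hw.
  - apply K in H. eapply t; [apply Hw|]. eapply t; [exact H|]. apply s, Hw.
Qed.

Lemma phi_of_represents a s e :
  represents a s e -> E e -> (forall x, e (s x) = s x) -> phi a = (s, e).
Proof.
  intros Ha Ee Hs.
  assert (He : eA a = e).
  { destruct (eA_spec a) as [E1 K1]. apply (E_ker_unique E HE _ _ (Rr a) E1 Ee K1).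
    intros x y. unfold Rr. rewrite (Ha (inr x) (inr y)). reflexivity. }
  unfold phi. f_equal; [|exact He].
  apply functional_extensionality. intro x. unfold sA. rewrite He.
  symmetry. apply (Ha (inl x) (inr (chA a x))). unfold chA. apply epsilon_spec.
  exists (s x). apply Ha. simpl. auto.
Qed.

Lemma phi_injective a b : left_total a -> left_total b -> phi a = phi b -> a = b.
Proof.
  intros Ha Hb Heq. apply part_ext. intros u v.
  assert (Hs : sA a = sA b) by exact (f_equal fst Heq).
  assert (He : eA a = eA b) by exact (f_equal snd Heq).
  pose proof (represents_phi a Ha u v) as Ka. pose proof (represents_phi b Hb u v) as Kb.
  rewrite Ka, Kb, Hs, He. reflexivity.
Qed.

Lemma phi_image p : rrest_carrier tmul E p <-> exists a, left_total a /\ phi a = p.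
Proof.
  destruct p as [s e]. split.
  - intros [Ee Hse]. simpl in Ee, Hse.
    assert (Hs : forall x, e (s x) = s x) by (intro x; exact (f_equal (fun h => h x) Hse)).
    exists (kpart (key s e)). split.
    + intro x. exists (s x). simpl. auto.
    + apply phi_of_represents; auto. intros u v. reflexivity.
  - intros [a [Hlt <-]]. split; simpl.
    + apply eA_spec.
    + apply functional_extensionality, sA_fix.
Qed.

Lemma phi_R a : phi (pR a) = rrest_R (phi a).
Proof.
  destruct (eA_spec a) as [Ea Ka].
  apply phi_of_represents; [|exact Ea|apply (E_idemp E HE _ Ea)].
  intros [x|x] [y|y]; symmetry; apply Ka.
Qed.

Lemma phi_mul dot meet : is_dot tmul E dot -> is_meet tmul E meet ->
  forall a b, left_total a -> left_total b ->
  phi (pmul a b) = rrest_mul tmul dot meet (phi a) (phi b).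
Proof.
  intros Hd Hm a b Ha Hb.
  destruct (eA_spec a) as [Ea _]. destruct (eA_spec b) as [Eb _].
  unfold rrest_mul. cbn [fst snd phi].
  rewrite (dot_char hX E HE dot Hd (eA a) (sA b) Ea).
  destruct (dot0_spec hX E HE (sA b) (eA a) Ea) as [Ed _].
  rewrite (meet_char hX E HE meet Hm _ _ Ed Eb).
  set (d := dot0 E (eA a) (sA b)).
  set (g := meet0 E d (eA b)).
  destruct (meet0_spec hX E HE d (eA b) Ed Eb) as [Eg _].
  apply phi_of_represents; [|exact Eg|intro x; apply (E_idemp E HE _ Eg)].
  apply (pmul_represents a b (sA a) (eA a) (sA b) (eA b) d g).
  - apply represents_phi, Ha.
  - apply represents_phi, Hb.
  - apply (E_idemp E HE _ Ea).
  - apply (E_idemp E HE _ Eb).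
  - apply sA_fix.
  - apply sA_fix.
  - apply (dot0_ker hX E HE).
  - apply (meet0_ker hX E HE).
Qed.
End Phi.

Theorem theorem7p10 (X : Type) (hX : inhabited X) :
  right_protomodal (@tmul X) /\
  forall E : (X -> X) -> Prop,
    max_left_pre_reduced (@tmul X) E ->
    inductive_right_E_monoid (@tmul X) tone E /\
    (forall dot meet, is_dot (@tmul X) E dot -> is_meet (@tmul X) E meet ->
       plt_iso_rrest E dot meet).
Proof.
  split; [exact (protomodal hX)|].
  intros E HE. split; [exact (inductive_right_E hX E HE)|].
  intros dot meet Hd Hm. exists (phi hX E). split; [|split; [|split]].
  - exact (phi_injective hX E HE).
  - exact (phi_image hX E HE).
  - exact (phi_mul hX E HE dot meet Hd Hm).
  - intros a _. exact (phi_R hX E HE a).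
Qed.
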